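(* Let $\mathcal{K}\subseteq\mathbb{R}^d$, let $f(x)=\mathbb{E}_\xi[f(x;\xi)]$ where for every realisation $\xi$ the function $f(\cdot;\xi):\mathbb{R}^d\to\mathbb{R}$ is differentiable with $\|\nabla f(x;\xi)-\nabla f(y;\xi)\|_2\le L\|x-y\|_2$ for all $x,y$, and $\mathbb{E}_\xi[\nabla f(x;\xi)]=\nabla f(x)$. Assume $\mathbb{E}_\xi[\|\nabla f(x)-\nabla f(x;\xi)\|_2^2]\le\sigma^2$ for all $x\in\mathcal{K}$. Let $\nu>0$, let $u=(u_1,\dots,u_d)$ with $u_1,\dots,u_d$ independent Rademacher random variables (independent of $\xi$), and define \[ g_\nu(x;\xi)=\frac{1}{\nu}\big(f(x+\nu u;\xi)-f(x;\xi)\big)u,\qquad \nabla f_\nu(x)=\mathbb{E}_u\Big[\frac{1}{\nu}\big(f(x+\nu u)-f(x)\big)u\Big]. \] Then for every $x\in\mathcal{K}$, \[ \mathbb{E}\big[\|g_\nu(x;\xi)-\nabla f_\nu(x)\|_\infty^2\big]\le \frac{3\nu^2d^2L^2}{2}+10\|\nabla f(x)\|_2^2+8\sigma^2 . \]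
   Context: A Rademacher random variable takes the values $+1$ and $-1$ with probability $1/2$ each. The expectation $\mathbb{E}$ is over both $u$ and $\xi$. *)

From HB Require Import structures.
From mathcomp Require Import all_boot all_order all_algebra.
From mathcomp Require Import all_classical all_reals all_analysis.
Set Implicit Arguments. Unset Strict Implicit. Unset Printing Implicit Defensive.
Import Order.TTheory GRing.Theory Num.Theory.
Import numFieldNormedType.Exports.
Local Open Scope ring_scope.

Definition norm2 {R : realType} {d : nat} (v : 'rV[R]_d) : R :=
  Num.sqrt (\sum_(i < d) (v ord0 i) ^+ 2).

(* Sup norm ||v||_oo (0 for d = 0) *)
Definition normInf {R : realType} {d : nat} (v : 'rV[R]_d) : R :=
  \big[Num.max/0]_(i < d) `|v ord0 i|.

Definition grad {R : realType} {d : nat} (f : 'rV[R]_d -> R) (x : 'rV[R]_d)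
  : 'rV[R]_d :=
  \row_(i < d) ('D_(delta_mx ord0 i) f x).

(* the Rademacher vector indexed by a sign pattern b : {0..d-1} -> bool *)
Definition signvec {R : realType} {d : nat} (b : {ffun 'I_d -> bool})
  : 'rV[R]_d :=
  \row_(i < d) (if b i then 1 else -1).

Definition g_nu {R : realType} {d : nat} (F : 'rV[R]_d -> R) (nu : R)
  (x : 'rV[R]_d) (b : {ffun 'I_d -> bool}) : 'rV[R]_d :=
  ((F (x + nu *: signvec b) - F x) / nu) *: signvec b.

(* grad f_nu(x) = E_u[ (f(x + nu u) - f(x))/nu u ], u uniform on {+-1}^d *)
Definition grad_f_nu {R : realType} {d : nat} (f : 'rV[R]_d -> R) (nu : R)
  (x : 'rV[R]_d) : 'rV[R]_d :=
  (2 ^+ d)^-1 *: \sum_(b : {ffun 'I_d -> bool}) g_nu f nu x b.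

From HB Require Import structures.
From mathcomp Require Import all_boot all_order all_algebra.
From mathcomp Require Import all_classical all_reals all_analysis.
From mathcomp Require Import measurable_realfun ring lra.
Import Order.TTheory GRing.Theory Num.Theory.
Import numFieldNormedType.Exports.
Local Open Scope ring_scope.

(* Write c = grad f(x) and z = c - grad f(x; xi) for the gradient noise.  A Taylor
   bound with the sharp constant L/2, for each f(.; xi) and by averaging for f,
   puts the difference quotients (f(x + nu u; xi) - f(x; xi)) / nu and
   (f(x + nu u) - f(x)) / nu within beta = L nu d / 2 of <grad f(x; xi), u> and
   <c, u>.  Hence g_nu - grad f_nu is coordinatewise within 2 beta of the error
   <c - z, u> u - c of the idealised estimator, and (p + q)^2 <= 3 p^2 + 3/2 q^2
   turns 2 beta into 6 beta^2 = 3 nu^2 d^2 L^2 / 2.  Averaged over u, the squared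
   sup-norm of the idealised error is at most 10/3 |c|^2 + 8/3 |z|^2 plus a term
   linear in z, which vanishes in expectation, while E |z|^2 <= sigma^2. *)

Section DotProduct.
Context {R : realType} {d : nat}.
Implicit Types (u v w : 'rV[R]_d) (a : R).

Definition dotr v w : R := \sum_i v ord0 i * w ord0 i.

Lemma dotrC v w : dotr v w = dotr w v.
Proof. by apply: eq_bigr => i _; rewrite mulrC. Qed.

Lemma dotrDl u v w : dotr (u + v) w = dotr u w + dotr v w.
Proof. by rewrite -big_split; apply: eq_bigr => i _; rewrite mxE mulrDl. Qed.

Lemma dotrZl a v w : dotr (a *: v) w = a * dotr v w.
Proof. by rewrite mulr_sumr; apply: eq_bigr => i _; rewrite mxE mulrA. Qed.

Lemma dotrZr a v w : dotr v (a *: w) = a * dotr v w.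
Proof. by rewrite dotrC dotrZl dotrC. Qed.

Lemma dotrNl v w : dotr (- v) w = - dotr v w.
Proof. by rewrite -scaleN1r dotrZl mulN1r. Qed.

Lemma dotrBl u v w : dotr (u - v) w = dotr u w - dotr v w.
Proof. by rewrite dotrDl dotrNl. Qed.

Lemma dotrBr u v w : dotr u (v - w) = dotr u v - dotr u w.
Proof. by rewrite !(dotrC u) dotrBl. Qed.

Lemma dotr_delta v k : dotr (delta_mx ord0 k) v = v ord0 k.
Proof.
rewrite /dotr (bigD1 k) //= big1 => [|i /negbTE ik]; last by rewrite mxE ik mul0r.
by rewrite mxE !eqxx mul1r addr0.
Qed.

Lemma dotrr_ge0 v : 0 <= dotr v v.
Proof. by apply: sumr_ge0 => i _; rewrite -expr2 sqr_ge0. Qed.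

Lemma sqr_norm2 v : norm2 v ^+ 2 = dotr v v.
Proof.
rewrite sqr_sqrtr; last by apply: sumr_ge0 => i _; exact: sqr_ge0.
by apply: eq_bigr => i _; rewrite expr2.
Qed.

Lemma norm2_ge0 v : 0 <= norm2 v.
Proof. exact: sqrtr_ge0. Qed.

Lemma norm2E v : norm2 v = Num.sqrt (dotr v v).
Proof. by congr Num.sqrt; apply: eq_bigr => i _; rewrite expr2. Qed.

Lemma norm2Z a v : norm2 (a *: v) = `|a| * norm2 v.
Proof.
by rewrite !norm2E dotrZl dotrZr mulrA -expr2 sqrtrM ?sqr_ge0 // sqrtr_sqr.
Qed.

Lemma sqr_norm2B v w :
  norm2 (v - w) ^+ 2 = norm2 v ^+ 2 + norm2 w ^+ 2 - 2 * dotr v w.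
Proof. rewrite !sqr_norm2 !dotrBl !dotrBr (dotrC w v); ring. Qed.

Lemma sqr_entry_le_norm2 v k : v ord0 k ^+ 2 <= norm2 v ^+ 2.
Proof.
rewrite sqr_norm2 /dotr (bigD1 k) //= expr2 lerDl.
by apply: sumr_ge0 => i _; rewrite -expr2 sqr_ge0.
Qed.

Lemma sqr_entries_le_norm2 v k i : i != k ->
  v ord0 k ^+ 2 + v ord0 i ^+ 2 <= norm2 v ^+ 2.
Proof.
move=> ik; rewrite sqr_norm2 /dotr (bigD1 k) //= (bigD1 i) //= !expr2 addrA lerDl.
by apply: sumr_ge0 => j _; rewrite -expr2 sqr_ge0.
Qed.

Lemma sqr_norm2_drop v k :
  norm2 (v - v ord0 k *: delta_mx ord0 k) ^+ 2 = norm2 v ^+ 2 - v ord0 k ^+ 2.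
Proof.
rewrite !sqr_norm2 !dotrBl !dotrBr !dotrZl !dotrZr !dotr_delta dotrC dotr_delta.
rewrite mxE !eqxx /=; ring.
Qed.

(* Lagrange's identity:
   2 (|v|^2 |w|^2 - <v, w>^2) = sum_(i,j) (v_i w_j - v_j w_i)^2. *)
Lemma dotr_le_norm2 v w : `|dotr v w| <= norm2 v * norm2 w.
Proof.
pose D i j := v ord0 i ^+ 2 * w ord0 j ^+ 2
              - v ord0 i * w ord0 i * (v ord0 j * w ord0 j).
have sumD : \sum_i \sum_j D i j = dotr v v * dotr w w - dotr v w ^+ 2.
  rewrite expr2 /dotr !mulr_suml -sumrB; apply: eq_bigr => i _.
  rewrite !mulr_sumr -sumrB; apply: eq_bigr => j _; rewrite /D; ring.
have : 0 <= \sum_i \sum_j (D i j + D j i).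
  apply: sumr_ge0 => i _; apply: sumr_ge0 => j _.
  have -> : D i j + D j i = (v ord0 i * w ord0 j - v ord0 j * w ord0 i) ^+ 2.
    by rewrite /D; ring.
  exact: sqr_ge0.
under eq_bigr do rewrite big_split /=.
rewrite big_split /= [X in _ + X]exchange_big /= sumD => lagrange.
rewrite !norm2E -sqrtrM ?dotrr_ge0 // -sqrtr_sqr ler_wsqrtr //.
lra.
Qed.

End DotProduct.

Section SignVectors.
Context {R : realType} {d : nat}.
Implicit Types (b : {ffun 'I_d -> bool}) (w : 'rV[R]_d) (a : R).

Lemma sum_signs_cst a : \sum_(b : {ffun 'I_d -> bool}) a = 2 ^+ d * a.
Proof. by rewrite sumr_const card_ffun card_bool card_ord -natrX mulr_natl. Qed.

Lemma signvec_sqr b i : (signvec b : 'rV[R]_d) ord0 i ^+ 2 = 1.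
Proof. by rewrite mxE; case: (b i); rewrite ?sqrrN expr1n. Qed.

Lemma norm_signvec b i : `|(signvec b : 'rV[R]_d) ord0 i| = 1.
Proof. by rewrite mxE; case: (b i); rewrite ?normrN normr1. Qed.

Lemma sqr_norm2_signvec b : norm2 (signvec b : 'rV[R]_d) ^+ 2 = d%:R.
Proof.
rewrite sqr_sqrtr; last by apply: sumr_ge0 => i _; exact: sqr_ge0.
by under eq_bigr do rewrite signvec_sqr; rewrite sumr_const card_ord.
Qed.

Definition flip_sign (i : 'I_d) b : {ffun 'I_d -> bool} :=
  [ffun k => if k == i then ~~ b k else b k].

Lemma flip_signK i : involutive (flip_sign i).
Proof.
move=> b; apply/ffunP => k; rewrite !ffunE.
by case: (k =P i) => // _; rewrite negbK.
Qed.

(* Flipping the i-th sign is an involution on sign patterns which, for i != j,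
   changes the sign of u_i u_j. *)
Lemma sum_signvec_mul i j :
  \sum_b (signvec b : 'rV[R]_d) ord0 i * signvec b ord0 j
    = (i == j)%:R * 2 ^+ d.
Proof.
have [<-|ij] := eqVneq i j.
  by under eq_bigr do rewrite -expr2 signvec_sqr; rewrite sum_signs_cst mul1r mulr1.
set S := \sum_b _; suff : S = - S by rewrite mul0r; lra.
rewrite {1}/S (reindex_inj (inv_inj (flip_signK i))) /= -sumrN.
apply: eq_bigr => b _; rewrite !mxE !ffunE eqxx eq_sym (negbTE ij).
by case: (b i); rewrite /= ?mulN1r ?mul1r ?opprK.
Qed.

Lemma sum_dotr_signvec_mul w j :
  \sum_b dotr w (signvec b) * signvec b ord0 j = 2 ^+ d * w ord0 j.
Proof.
under eq_bigr do rewrite /dotr mulr_suml.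
rewrite exchange_big /=.
under eq_bigr do
  rewrite -(eq_bigr _ (fun b _ => mulrA _ _ _)) -mulr_sumr sum_signvec_mul.
rewrite (bigD1 j) //= big1 => [|i /negbTE ij]; last by rewrite ij mul0r mulr0.
by rewrite eqxx mul1r addr0 mulrC.
Qed.

Definition rademacher_mean (F : {ffun 'I_d -> bool} -> R) : R :=
  (2 ^+ d)^-1 * \sum_b F b.

Implicit Types (F G : {ffun 'I_d -> bool} -> R).

Lemma rademacher_mean_cst a : rademacher_mean (fun=> a) = a.
Proof.
by rewrite /rademacher_mean sum_signs_cst mulrA mulVf ?mul1r // expf_neq0.
Qed.

Lemma rademacher_meanD F G :
  rademacher_mean (fun b => F b + G b) = rademacher_mean F + rademacher_mean G.
Proof. by rewrite /rademacher_mean big_split mulrDr. Qed.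

Lemma rademacher_meanZ a F :
  rademacher_mean (fun b => a * F b) = a * rademacher_mean F.
Proof. by rewrite /rademacher_mean -mulr_sumr mulrCA. Qed.

Lemma rademacher_meanB F G :
  rademacher_mean (fun b => F b - G b) = rademacher_mean F - rademacher_mean G.
Proof.
rewrite rademacher_meanD -mulN1r -rademacher_meanZ.
by congr (_ + rademacher_mean _); apply/funext => b; rewrite mulN1r.
Qed.

Lemma ler_rademacher_mean F G :
  (forall b, F b <= G b) -> rademacher_mean F <= rademacher_mean G.
Proof.
by move=> FG; rewrite ler_wpM2l ?invr_ge0 ?exprn_ge0 // ler_sum.
Qed.

Lemma rademacher_mean_ge0 F :
  (forall b, 0 <= F b) -> 0 <= rademacher_mean F.
Proof.
by move=> F0; rewrite -(rademacher_mean_cst 0); exact: ler_rademacher_mean.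
Qed.

Lemma ler_norm_rademacher_mean F :
  `|rademacher_mean F| <= rademacher_mean (fun b => `|F b|).
Proof.
rewrite normrM ger0_norm ?invr_ge0 ?exprn_ge0 //.
by rewrite ler_wpM2l ?invr_ge0 ?exprn_ge0 // ler_norm_sum.
Qed.

Lemma rademacher_mean_dotr_signvec w j :
  rademacher_mean (fun b => dotr w (signvec b) * signvec b ord0 j) = w ord0 j.
Proof.
by rewrite /rademacher_mean sum_dotr_signvec_mul mulrA mulVf ?mul1r // expf_neq0.
Qed.

Lemma rademacher_mean_dotr_sqr w :
  rademacher_mean (fun b => dotr w (signvec b) ^+ 2) = norm2 w ^+ 2.
Proof.
have expand b : dotr w (signvec b) ^+ 2
    = \sum_j w ord0 j * (dotr w (signvec b) * signvec b ord0 j).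
  by rewrite expr2 {2}/dotr mulr_sumr; apply: eq_bigr => j _; rewrite mulrCA.
rewrite /rademacher_mean (eq_bigr _ (fun b _ => expand b)) exchange_big mulr_sumr.
rewrite sqr_norm2; apply: eq_bigr => j _.
by rewrite -mulr_sumr mulrCA -/(rademacher_mean _) rademacher_mean_dotr_signvec.
Qed.

End SignVectors.

Section SupNorm.
Context {R : realType} {d : nat}.
Implicit Types (u v : 'rV[R]_d) (B : R).

Lemma normInf_ge0 v : 0 <= normInf v.
Proof. by apply: (big_ind (fun x => 0 <= x)) => // x y x0 _; rewrite le_max x0. Qed.

Lemma le_normInf v i : `|v ord0 i| <= normInf v.
Proof. exact: le_bigmax. Qed.

Lemma normInf_le v B : 0 <= B -> (forall i, `|v ord0 i| <= B) -> normInf v <= B.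
Proof. by move=> B0 vB; apply: bigmax_le. Qed.

Lemma sqr_normInf_le v B :
  0 <= B -> (forall i, v ord0 i ^+ 2 <= B) -> normInf v ^+ 2 <= B.
Proof.
move=> B0 vB; rewrite -(sqr_sqrtr B0) ler_sqr ?nnegrE ?normInf_ge0 ?sqrtr_ge0 //.
apply: normInf_le => [|i]; first exact: sqrtr_ge0.
by rewrite -sqrtr_sqr ler_wsqrtr.
Qed.

Lemma normInfN v : normInf (- v) = normInf v.
Proof. by apply: eq_bigr => i _; rewrite mxE normrN. Qed.

Lemma normInfD_le u v : normInf (u + v) <= normInf u + normInf v.
Proof.
apply: normInf_le => [|i]; first by rewrite addr_ge0 ?normInf_ge0.
by rewrite mxE (le_trans (ler_normD _ _)) // lerD ?le_normInf.
Qed.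

Lemma sqr_normInfD_le u v :
  normInf (u + v) ^+ 2 <= 3 * normInf u ^+ 2 + 3 / 2 * normInf v ^+ 2.
Proof.
have := normInfD_le u v; have := normInf_ge0 (u + v).
have := normInf_ge0 u; have := normInf_ge0 v.
have := sqr_ge0 (2 * normInf u - normInf v).
set x := normInf (u + v); set a := normInf u; set b := normInf v; nra.
Qed.

Lemma normInf_scale_signvec (a : R) b : normInf (a *: signvec b : 'rV[R]_d) <= `|a|.
Proof.
by apply: normInf_le => // i; rewrite mxE normrM norm_signvec mulr1.
Qed.

End SupNorm.

Section LipschitzGradient.
Context {R : realType} {d : nat}.
Local Open Scope classical_set_scope.
Implicit Types (G : 'rV[R]_d -> R) (x v : 'rV[R]_d).

Lemma deriveE_grad G x v : differentiable G x -> 'D_v G x = dotr (grad G x) v.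
Proof.
move=> dG; rewrite deriveE // {1}(row_sum_delta v) linear_sum dotrC.
by apply: eq_bigr => i _; rewrite linearZ /= -deriveE // /grad mxE.
Qed.

Lemma is_derive_line G x v t : differentiable G (x + t *: v) ->
  is_derive t 1 (fun s => G (x + s *: v)) ('D_v G (x + t *: v)).
Proof.
move=> dG.
have shift_line :
    (fun h : R => h^-1 *: (((fun s => G (x + s *: v)) \o shift t) (h *: 1)
                           - G (x + t *: v)))
    = (fun h : R => h^-1 *: ((G \o shift (x + t *: v)) (h *: v) - G (x + t *: v))).
  apply/funext => h /=; congr (_ *: (G _ - _)).
  rewrite /shift /= (_ : h *: 1 = h); last by rewrite /GRing.scale /= mulr1.
  by rewrite scalerDl addrCA.
apply: DeriveDef; rewrite /derivable /derive /= shift_line //.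
exact: diff_derivable.
Qed.

Lemma mvt_line_quadratic G x v (k : R) : (forall y, differentiable G y) ->
  exists2 s, s \in `]0, 1[%R &
    G (x + v) - G x - 'D_v G x - k
      = 'D_v G (x + s *: v) - 'D_v G x - k * (s + s).
Proof.
move=> dG.
pose psi (s : R) := G (x + s *: v) - 'D_v G x * s - k * (s * s).
have psi' (s : R) :
    is_derive s 1 psi ('D_v G (x + s *: v) - 'D_v G x - k * (s + s)).
  apply: is_derive_eq.
    by apply: is_deriveB; first apply: is_deriveB; first exact: is_derive_line.
  by rewrite /GRing.scale /=; ring.
have psi_cont : {within `[0, 1], continuous psi}.
  by apply: derivable_within_continuous => s _; case: (psi' s).
have psi01 : psi 1 - psi 0 = G (x + v) - G x - 'D_v G x - k.
  by rewrite /psi scale1r scale0r addr0; ring.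
have [s s01 psi_mvt] := MVT ltr01 (fun s _ => psi' s) psi_cont.
by exists s => //; rewrite psi01 subr0 mulr1 in psi_mvt.
Qed.

(* The MVT applied to [s |-> G (x + s v) - s D_v G(x) -+ (L/2) |v|^2 s^2]
   yields the sharp constant L/2 without integrating along the segment. *)
Lemma taylor_lipschitz_grad G (L : R) x v :
  (forall y, differentiable G y) ->
  (forall y z, norm2 (grad G y - grad G z) <= L * norm2 (y - z)) ->
  `|G (x + v) - G x - dotr (grad G x) v| <= L / 2 * norm2 v ^+ 2.
Proof.
move=> dG G_lip; set S := norm2 v ^+ 2.
have dir_lip s : 0 <= s -> `|'D_v G (x + s *: v) - 'D_v G x| <= L * s * S.
  move=> s0; rewrite !deriveE_grad // -dotrBl.
  apply: le_trans (dotr_le_norm2 _ _) _.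
  have := G_lip (x + s *: v) x.
  rewrite addrAC subrr add0r norm2Z ger0_norm // => lip.
  by apply: le_trans (ler_wpM2r (norm2_ge0 v) lip) _; rewrite /S expr2 !mulrA.
have mvt k : exists2 s, 0 <= s &
    `|G (x + v) - G x - 'D_v G x - k + k * (s + s)| <= L * s * S.
  have [s s01 ->] := mvt_line_quadratic G x v k dG.
  have s0 : 0 <= s by move: s01; rewrite in_itv => /andP[/ltW].
  by exists s => //; rewrite subrK; exact: dir_lip.
rewrite -(deriveE_grad G x v (dG x)) ler_norml; apply/andP; split.
- have [s s0] := mvt (- (L / 2 * S)); rewrite ler_norml => /andP[lb _]; lra.
- have [s s0] := mvt (L / 2 * S); rewrite ler_norml => /andP[_ ub]; lra.
Qed.

End LipschitzGradient.

Section SignEstimator.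
Context {R : realType} {d : nat}.
Implicit Types (c z : 'rV[R]_d) (b : {ffun 'I_d -> bool}).

Lemma sqr_sign_error_entry c (a : R) b i :
  ((a *: signvec b - c) ord0 i) ^+ 2 = (a - c ord0 i * signvec b ord0 i) ^+ 2.
Proof.
rewrite -[RHS]mulr1 -(signvec_sqr b i) -exprMn mulrBl -mulrA -expr2 signvec_sqr.
by rewrite !mxE mulr1.
Qed.

Lemma sqr_sign_entry c b i : (c ord0 i * signvec b ord0 i) ^+ 2 = c ord0 i ^+ 2.
Proof. by rewrite exprMn signvec_sqr mulr1. Qed.

Lemma rademacher_mean_sqr_normInf_le (X : {ffun 'I_d -> bool} -> 'rV[R]_d)
    (M : {ffun 'I_d -> bool} -> R) :
  (forall b, 0 <= M b) -> (forall b i, X b ord0 i ^+ 2 <= M b) ->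
  rademacher_mean (fun b => normInf (X b) ^+ 2) <= rademacher_mean M.
Proof. by move=> M0 XM; apply: ler_rademacher_mean => b; exact: sqr_normInf_le. Qed.

Lemma sign_estimator_error_le_spread c :
  (forall i, c ord0 i ^+ 2 <= 3 / 5 * norm2 c ^+ 2) -> forall z,
  rademacher_mean
      (fun b => normInf (dotr (c - z) (signvec b) *: signvec b - c) ^+ 2)
    <= 10 / 3 * norm2 c ^+ 2 + 8 / 3 * norm2 z ^+ 2 + dotr (-4 *: c) z.
Proof.
move=> spread z; set A := fun b => dotr (c - z) (signvec b).
apply: (le_trans (rademacher_mean_sqr_normInf_le _
    (fun b => 2 * A b ^+ 2 + 6 / 5 * norm2 c ^+ 2) _ _)).
- by move=> b; have := sqr_ge0 (A b); have := sqr_ge0 (norm2 c); lra.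
- move=> b i; rewrite sqr_sign_error_entry -/(A b).
  have := spread i; have := sqr_ge0 (A b + c ord0 i * signvec b ord0 i).
  have := sqr_sign_entry c b i.
  set y := c ord0 i * signvec b ord0 i; set a := A b; nra.
rewrite rademacher_meanD rademacher_meanZ rademacher_mean_cst.
rewrite rademacher_mean_dotr_sqr sqr_norm2B dotrZl.
by have := sqr_ge0 (norm2 z); have := sqr_ge0 (norm2 c); lra.
Qed.

(* For i = k the error coordinate is <c - c_k e_k - z, u>,
   by [sqr_sign_error_entry]. *)
Lemma sign_estimator_error_le_peak c k :
  3 / 5 * norm2 c ^+ 2 < c ord0 k ^+ 2 -> forall z,
  rademacher_mean
      (fun b => normInf (dotr (c - z) (signvec b) *: signvec b - c) ^+ 2)
    <= 10 / 3 * norm2 c ^+ 2 + 8 / 3 * norm2 z ^+ 2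
       + dotr (-2 *: (c - c ord0 k *: delta_mx ord0 k) - (10 / 3) *: c) z.
Proof.
move=> peak z; have ckN := sqr_entry_le_norm2 c k.
have drop_k b : dotr (c - c ord0 k *: delta_mx ord0 k) (signvec b)
    = dotr c (signvec b) - c ord0 k * signvec b ord0 k.
  by rewrite dotrBl dotrZl dotr_delta.
move: (c - _ *: _) (sqr_norm2_drop c k) drop_k => c' c'N drop_k.
set A := fun b => dotr (c - z) (signvec b).
apply: (le_trans (rademacher_mean_sqr_normInf_le _ (fun b =>
    dotr (c' - z) (signvec b) ^+ 2 + 5 / 3 * A b ^+ 2
    + 5 / 2 * (norm2 c ^+ 2 - c ord0 k ^+ 2)) _ _)).
- move=> b; have := sqr_ge0 (dotr (c' - z) (signvec b)).
  by have := sqr_ge0 (A b); lra.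
- move=> b i; rewrite sqr_sign_error_entry -/(A b).
  have := sqr_ge0 (dotr (c' - z) (signvec b)); have := sqr_ge0 (A b).
  have [->|ik] := eqVneq i k.
    have -> : A b - c ord0 k * signvec b ord0 k = dotr (c' - z) (signvec b).
      by rewrite /A !dotrBl drop_k; ring.
    lra.
  have := sqr_entries_le_norm2 c k i ik.
  have := sqr_ge0 (2 / 3 * A b + c ord0 i * signvec b ord0 i).
  have := sqr_sign_entry c b i.
  set y := c ord0 i * signvec b ord0 i; set a := A b; nra.
rewrite !rademacher_meanD !rademacher_meanZ rademacher_mean_cst.
rewrite !rademacher_mean_dotr_sqr !sqr_norm2B c'N dotrBl !dotrZl.
by have := sqr_ge0 (norm2 z); have := sqr_ge0 (norm2 c); lra.
Qed.

(* The error of the estimator <c - z, u> u of c from a noisy gradient c - z;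
   the term <l, z> vanishes in expectation for centred noise z. *)
Lemma sign_estimator_error_le c : exists l, forall z,
  rademacher_mean
      (fun b => normInf (dotr (c - z) (signvec b) *: signvec b - c) ^+ 2)
    <= 10 / 3 * norm2 c ^+ 2 + 8 / 3 * norm2 z ^+ 2 + dotr l z.
Proof.
case: (boolP [exists k, 3 / 5 * norm2 c ^+ 2 < c ord0 k ^+ 2]).
  by move=> /existsP[k /sign_estimator_error_le_peak]; eexists.
rewrite negb_exists => /forallP spread; eexists.
apply: sign_estimator_error_le_spread.
by move=> i; rewrite leNgt; exact: spread.
Qed.

End SignEstimator.

Section FiniteDifferences.
Context {R : realType} {d : nat}.
Implicit Types (x c g : 'rV[R]_d) (b : {ffun 'I_d -> bool}).

Lemma diff_quotient_sign_err_le {G : 'rV[R]_d -> R} {g x} {L nu : R} {b} :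
  0 < nu ->
  (forall v, `|G (x + v) - G x - dotr g v| <= L / 2 * norm2 v ^+ 2) ->
  `|(G (x + nu *: signvec b) - G x) / nu - dotr g (signvec b)|
    <= L * nu * d%:R / 2.
Proof.
move=> nu0 /(_ (nu *: signvec b)).
rewrite dotrZr norm2Z exprMn sqr_norm2_signvec (gtr0_norm nu0) => taylor.
have -> : (G (x + nu *: signvec b) - G x) / nu - dotr g (signvec b)
    = (G (x + nu *: signvec b) - G x - nu * dotr g (signvec b)) / nu.
  by field; rewrite gt_eqF.
rewrite normrM normfV (gtr0_norm nu0) ler_pdivrMr //.
by rewrite [leRHS](_ : _ = L / 2 * (nu ^+ 2 * d%:R)) //; ring.
Qed.

Lemma normInf_grad_f_nu_err_le {f : 'rV[R]_d -> R} {nu x c} {beta : R} :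
  (forall b,
    `|(f (x + nu *: signvec b) - f x) / nu - dotr c (signvec b)| <= beta) ->
  normInf (grad_f_nu f nu x - c) <= beta.
Proof.
move=> f_err; have beta0 : 0 <= beta by apply: le_trans (f_err [ffun=> true]).
apply: normInf_le => // i.
have -> : (grad_f_nu f nu x - c) ord0 i = rademacher_mean (fun b =>
    ((f (x + nu *: signvec b) - f x) / nu - dotr c (signvec b)) * signvec b ord0 i).
  under eq_fun do rewrite mulrBl.
  rewrite rademacher_meanB rademacher_mean_dotr_signvec !mxE summxE.
  by congr (_ * _ - _); apply: eq_bigr => b _; rewrite !mxE.
apply: le_trans (ler_norm_rademacher_mean _) _.
rewrite -[leRHS](@rademacher_mean_cst _ d); apply: ler_rademacher_mean => b.
by rewrite normrM norm_signvec mulr1.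
Qed.

Lemma sqr_normInf_g_nu_err_le {G : 'rV[R]_d -> R} {nu x b c z h} {beta : R} :
  `|(G (x + nu *: signvec b) - G x) / nu - dotr (c - z) (signvec b)| <= beta ->
  normInf (h - c) <= beta ->
  normInf (g_nu G nu x b - h) ^+ 2
    <= 3 * normInf (dotr (c - z) (signvec b) *: signvec b - c) ^+ 2
       + 6 * beta ^+ 2.
Proof.
set q := (G _ - G x) / nu; set A := dotr (c - z) _ => q_err h_err.
have -> : g_nu G nu x b - h
    = (A *: signvec b - c) + ((q - A) *: signvec b - (h - c)).
  by apply/rowP => i; rewrite /g_nu -/q !mxE; ring.
apply: le_trans (sqr_normInfD_le _ _) _.
have : normInf ((q - A) *: signvec b - (h - c)) <= 2 * beta.
  apply: le_trans (normInfD_le _ _) _; rewrite normInfN.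
  by have := normInf_scale_signvec (q - A) b; lra.
have := normInf_ge0 ((q - A) *: signvec b - (h - c)).
set y := normInf _; set e := normInf _; nra.
Qed.

End FiniteDifferences.

Section Probability.
Context {R : realType} {d : nat} {dT : measure_display} {T : measurableType dT}.
Variable P : probability T R.

Lemma integral_cst_probability (k : R) : (\int[P]_xi k%:E)%E = k%:E.
Proof.
rewrite integral_cst //.
have -> : (P : {measure set T -> \bar R}) setT = 1%E by exact: probability_setT.
by rewrite mule1.
Qed.

Lemma integrable_cst_probability (k : R) : P.-integrable setT (fun _ => k%:E).
Proof. exact: finite_measure_integrable_cst. Qed.

Lemma measurable_normInf (V : T -> 'rV[R]_d) :
  (forall i, measurable_fun setT (fun xi => V xi ord0 i)) ->
  measurable_fun setT (fun xi => normInf (V xi)).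
Proof.
move=> mV; rewrite /normInf; elim: (index_enum _) => [|i s IH].
  by under eq_fun do rewrite big_nil; exact: measurable_cst.
under eq_fun do rewrite big_cons.
by apply: measurable_maxr => //; apply: measurableT_comp.
Qed.

End Probability.

Section Expectation.
Context {R : realType} {d : nat} {dT : measure_display} {T : measurableType dT}.
Context {P : probability T R} {F : T -> 'rV[R]_d -> R} {f : 'rV[R]_d -> R}.
Context {x : 'rV[R]_d}.
Hypothesis F_int : forall y, P.-integrable setT (fun xi => (F xi y)%:E).
Hypothesis F_mean : forall y, (\int[P]_xi (F xi y)%:E)%E = (f y)%:E.
Hypothesis gradF_int : forall i,
  P.-integrable setT (fun xi => (grad (F xi) x ord0 i)%:E).
Hypothesis gradF_mean : forall i,
  (\int[P]_xi (grad (F xi) x ord0 i)%:E)%E = (grad f x ord0 i)%:E.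

Lemma measurable_F y : measurable_fun setT (fun xi => F xi y).
Proof. exact/measurable_EFinP/(measurable_int _ (F_int y)). Qed.

Lemma measurable_gradF i : measurable_fun setT (fun xi => grad (F xi) x ord0 i).
Proof. exact/measurable_EFinP/(measurable_int _ (gradF_int i)). Qed.

Lemma measurable_mean_sqr_g_nu_err nu h :
  measurable_fun setT
    (fun xi => rademacher_mean (fun b => normInf (g_nu (F xi) nu x b - h) ^+ 2)).
Proof.
apply: measurable_funM => //; apply: measurable_sum => b.
apply: measurable_funX; apply: measurable_normInf => i.
under eq_fun do rewrite !mxE.
apply: measurable_funB => //; apply: measurable_funM => //.
by apply: measurable_funM => //; apply: measurable_funB; exact: measurable_F.
Qed.

Lemma integrable_dotr_gradF l :
  P.-integrable setT (fun xi => (dotr l (grad (F xi) x))%:E).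
Proof.
apply: (eq_integrable measurableT
    (fun xi => \sum_i (l ord0 i)%:E * (grad (F xi) x ord0 i)%:E)%E).
  by move=> xi _; rewrite -sumEFin; apply: eq_bigr => i _; rewrite EFinM.
by apply: (integrable_sum measurableT) => i _; exact: integrableZl.
Qed.

Lemma integral_dotr_gradF l :
  (\int[P]_xi (dotr l (grad (F xi) x))%:E)%E = (dotr l (grad f x))%:E.
Proof.
under eq_integral do rewrite /dotr -sumEFin.
rewrite integral_sum //; last first.
  by move=> i; under eq_fun do rewrite EFinM; exact: integrableZl.
rewrite -sumEFin; apply: eq_bigr => i _.
by under eq_integral do rewrite EFinM; rewrite integralZl // gradF_mean EFinM.
Qed.

Lemma taylor_mean v (B : R) :
  (forall xi, `|F xi (x + v) - F xi x - dotr (grad (F xi) x) v| <= B) ->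
  `|f (x + v) - f x - dotr (grad f x) v| <= B.
Proof.
move=> F_taylor.
set r := fun xi => F xi (x + v) - F xi x - dotr v (grad (F xi) x).
have incr_int : P.-integrable setT (EFin \o (fun xi => F xi (x + v) - F xi x)).
  apply: (eq_integrable measurableT (fun xi => (F xi (x + v))%:E - (F xi x)%:E)%E).
    by move=> xi _; rewrite /= EFinB.
  exact: integrableB.
have r_int : P.-integrable setT (EFin \o r).
  apply: (eq_integrable measurableT (fun xi =>
      (F xi (x + v) - F xi x)%:E - (dotr v (grad (F xi) x))%:E)%E).
    by move=> xi _; rewrite /r /= EFinB.
  by apply: integrableB => //; exact: integrable_dotr_gradF.
have r_mean : (\int[P]_xi (r xi)%:E)%E = (f (x + v) - f x - dotr (grad f x) v)%:E.
  under eq_integral do rewrite EFinB.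
  rewrite (integralB_EFin _ incr_int (integrable_dotr_gradF v)) //.
  rewrite integral_dotr_gradF.
  under eq_integral do rewrite EFinB.
  by rewrite (integralB_EFin _ (F_int _) (F_int _)) // !F_mean dotrC -!EFinB.
have r_le xi : `|r xi| <= B by rewrite /r dotrC.
have ub : (\int[P]_xi (r xi)%:E <= \int[P]_xi B%:E)%E.
  apply: le_integral => // [|xi _]; first exact: integrable_cst_probability.
  by rewrite lee_fin; have := r_le xi; rewrite ler_norml => /andP[].
have lb : (\int[P]_xi (- B)%:E <= \int[P]_xi (r xi)%:E)%E.
  apply: le_integral => // [|xi _]; first exact: integrable_cst_probability.
  by rewrite lee_fin; have := r_le xi; rewrite ler_norml => /andP[].
rewrite !integral_cst_probability r_mean !lee_fin in ub lb.
by rewrite ler_norml lb ub.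
Qed.

Let noise xi := grad f x - grad (F xi) x.

Lemma measurable_sqr_norm2_noise :
  measurable_fun setT (fun xi => norm2 (noise xi) ^+ 2).
Proof.
have m_entry i : measurable_fun setT (fun xi => noise xi ord0 i).
  rewrite (_ : (fun xi => _)
              = (fun xi => grad f x ord0 i - grad (F xi) x ord0 i)).
    by apply: measurable_funB => //; exact: measurable_gradF.
  by apply/funext => xi; rewrite !mxE.
under eq_fun do rewrite sqr_norm2.
by apply: measurable_sum => i; exact: measurable_funM.
Qed.

Context {sigma : R}.
Hypothesis gradF_var :
  (\int[P]_xi (norm2 (grad f x - grad (F xi) x) ^+ 2)%:E <= (sigma ^+ 2)%:E)%E.

Lemma integrable_sqr_norm2_noise :
  P.-integrable setT (fun xi => (norm2 (noise xi) ^+ 2)%:E).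
Proof.
apply/integrableP; split.
  exact/measurable_EFinP/measurable_sqr_norm2_noise.
rewrite (eq_integral (fun xi => (norm2 (noise xi) ^+ 2)%:E)) => [|xi _].
  exact: le_lt_trans gradF_var (ltry _).
by rewrite /= ger0_norm // sqr_ge0.
Qed.

Lemma integral_noise_quadratic_le (K a : R) (l : 'rV[R]_d) : 0 <= a ->
  (\int[P]_xi (K + a * norm2 (noise xi) ^+ 2 + dotr l (noise xi))%:E
    <= (K + a * sigma ^+ 2)%:E)%E.
Proof.
move=> a0; set N := fun xi => norm2 (noise xi) ^+ 2.
have N_int : P.-integrable setT (EFin \o N) := integrable_sqr_norm2_noise.
set K' := K + dotr l (grad f x).
have KN_int : P.-integrable setT (EFin \o (fun xi => K' + a * N xi)).
  apply: (eq_integrable measurableT (fun xi => K'%:E + a%:E * (N xi)%:E)%E).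
    by move=> xi _; rewrite /= EFinD EFinM.
  apply: integrableD => //; first exact: integrable_cst_probability.
  exact: integrableZl.
rewrite (eq_integral (fun xi =>
    (K' + a * N xi)%:E - (dotr l (grad (F xi) x))%:E)%E) => [|xi _]; last first.
  by rewrite -EFinB /K' /N /noise dotrBr; congr EFin; ring.
rewrite (integralB_EFin _ KN_int (integrable_dotr_gradF l)) ?integral_dotr_gradF //.
under eq_integral do rewrite EFinD EFinM.
rewrite (integralD _ (integrable_cst_probability _ _) (integrableZl _ _ N_int)) //.
rewrite integral_cst_probability (integralZl _ N_int) //.
set IN := (\int[P]_xi (N xi)%:E)%E.
have IN_le : (IN <= (sigma ^+ 2)%:E)%E := gradF_var.
have IN_ge0 : (0 <= IN)%E by apply: integral_ge0 => xi _; rewrite lee_fin sqr_ge0.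
have IN_fin : IN \is a fin_num by rewrite ge0_fin_numE // (le_lt_trans IN_le) ?ltry.
rewrite -(fineK IN_fin) -EFinM -EFinD lee_fin /K'.
have := fine_ge0 IN_ge0; have : fine IN <= sigma ^+ 2 by rewrite -lee_fin fineK.
nra.
Qed.

Lemma integral_le_noise_quadratic (Y : T -> R) (K a : R) (l : 'rV[R]_d) :
  measurable_fun setT Y -> (forall xi, 0 <= Y xi) -> 0 <= a ->
  (forall xi, Y xi <= K + a * norm2 (noise xi) ^+ 2 + dotr l (noise xi)) ->
  (\int[P]_xi (Y xi)%:E <= (K + a * sigma ^+ 2)%:E)%E.
Proof.
move=> mY Y0 a0 Y_le; apply: (le_trans _ (integral_noise_quadratic_le K a l a0)).
apply: ge0_le_integral => //.
- by move=> xi _; rewrite lee_fin.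
- exact/measurable_EFinP.
- apply/measurable_EFinP.
  rewrite /noise; under eq_fun do rewrite dotrBr.
  apply: measurable_funD.
    apply: measurable_funD => //.
    by apply: measurable_funM => //; exact: measurable_sqr_norm2_noise.
  apply: measurable_funB => //.
  exact/measurable_EFinP/(measurable_int _ (integrable_dotr_gradF l)).
- by move=> xi _; rewrite lee_fin.
Qed.

End Expectation.

Theorem lemma3 (R : realType) (d : nat) (dT : measure_display)
  (T : measurableType dT) (P : probability T R)
  (K : set 'rV[R]_d) (F : T -> 'rV[R]_d -> R) (f : 'rV[R]_d -> R)
  (L sigma nu : R)
  (* each f(.; xi) is differentiable with L-Lipschitz gradient *)
  (hFdiff : forall xi x, differentiable (F xi) x)
  (hFlip : forall xi x y,
      norm2 (grad (F xi) x - grad (F xi) y) <= L * norm2 (x - y))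
  (* f(x) = E_xi[f(x; xi)] *)
  (hFint : forall x, P.-integrable setT (fun xi => (F xi x)%:E))
  (hf : forall x, (\int[P]_xi (F xi x)%:E)%E = (f x)%:E)
  (* f differentiable and E_xi[grad f(x; xi)] = grad f(x) *)
  (hfdiff : forall x, differentiable f x)
  (hgint : forall x (i : 'I_d),
      P.-integrable setT (fun xi => (grad (F xi) x ord0 i)%:E))
  (hgunb : forall x (i : 'I_d),
      (\int[P]_xi (grad (F xi) x ord0 i)%:E)%E = (grad f x ord0 i)%:E)
  (* bounded variance on K *)
  (hvar : forall x, K x ->
      (\int[P]_xi ((norm2 (grad f x - grad (F xi) x)) ^+ 2)%:E
        <= (sigma ^+ 2)%:E)%E)
  (hnu : 0 < nu) :
  forall x, K x ->
  (\int[P]_xi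
     ((2 ^+ d)^-1 * \sum_(b : {ffun 'I_d -> bool})
        (normInf (g_nu (F xi) nu x b - grad_f_nu f nu x)) ^+ 2)%:E
   <= (3 * nu ^+ 2 * (d%:R) ^+ 2 * L ^+ 2 / 2
       + 10 * (norm2 (grad f x)) ^+ 2 + 8 * sigma ^+ 2)%:E)%E.
Proof.
move=> x Kx; set c := grad f x; set beta := L * nu * d%:R / 2.
have taylorF xi v := taylor_lipschitz_grad (F xi) L x v (hFdiff xi) (hFlip xi).
have F_err xi b : `|(F xi (x + nu *: signvec b) - F xi x) / nu
    - dotr (c - (c - grad (F xi) x)) (signvec b)| <= beta.
  rewrite opprB addrCA subrr addr0.
  exact: diff_quotient_sign_err_le hnu (taylorF xi).
have f_err b : `|(f (x + nu *: signvec b) - f x) / nu - dotr c (signvec b)| <= beta.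
  apply: (diff_quotient_sign_err_le hnu) => v.
  exact: taylor_mean hFint hf (hgint x) (hgunb x) _ _ (taylorF^~ v).
have h_err := normInf_grad_f_nu_err_le f_err.
have [l sign_err] := sign_estimator_error_le c.
rewrite [X in (_ <= X%:E)%E](_ : _ = 10 * norm2 c ^+ 2 + 6 * beta ^+ 2
                                    + 8 * sigma ^+ 2); last by rewrite /beta; lra.
apply: (integral_le_noise_quadratic (hgint x) (hgunb x) (hvar x Kx) _ _ _ (3 *: l)).
- exact: measurable_mean_sqr_g_nu_err.
- by move=> xi; apply: rademacher_mean_ge0 => b; exact: sqr_ge0.
- by [].
move=> xi; set z := c - grad (F xi) x.
apply: (le_trans (ler_rademacher_mean _ _ (fun b =>
  sqr_normInf_g_nu_err_le (F_err xi b) h_err))).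
rewrite rademacher_meanD rademacher_meanZ rademacher_mean_cst dotrZl.
by have := sign_err z; lra.
Qed.
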